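(* Consider the pursuit-evasion problem described in the context, with a fixed final time $T>0$. For every state $\mathbf{x}=(x,y)$ with $\|\mathbf{x}\|>1$ such that $x\le 0$ or $y\ge 1$, the Evader's optimal trajectory starting at $\mathbf{x}$ avoids the constraint, i.e. it never reaches the Proximity Circle $\|\mathbf{x}\|=1$.
   Context: Pursuer-fixed frame: the Evader's relative position $\mathbf{x}(t)=(x(t),y(t))\in\mathbb{R}^2$ evolves as $\dot x=\mu\cos\psi(t)-1$, $\dot y=\mu\sin\psi(t)$, $\mathbf{x}(0)=\mathbf{x}_0$, where $\mu\in(0,1)$ is the Evader/Pursuer speed ratio and the Evader chooses its heading $\psi(t)$. The Proximity Circle is the unit circle $\|\mathbf{x}\|=1$; the capture-avoidance constraint is $\|\mathbf{x}(t)\|\ge 1$ for all $t\in[0,T]$. For a fixed final time $T$, the Evader wishes to maximize $\|\mathbf{x}(T)\|^2$ subject to this constraint. Throughout the paper it is assumed (by symmetry about the $x$-axis) that $y\ge 0$. *)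

From HB Require Import structures.
From mathcomp Require Import all_boot all_order all_algebra.
From mathcomp Require Import all_classical all_reals all_analysis.
Set Implicit Arguments. Unset Strict Implicit. Unset Printing Implicit Defensive.
Import Order.TTheory GRing.Theory Num.Theory.
Local Open Scope classical_set_scope.
Local Open Scope ring_scope.

Section PE.
Variable R : realType.

(* x-coordinate of the relative position at time t, starting at (x0,y0),
   under Evader heading psi:  x(t) = x0 + int_0^t (mu cos psi(s) - 1) ds *)
Definition trajx (mu : R) (psi : R -> R) (x0 : R) (t : R) : R :=
  x0 + Rintegral lebesgue_measure `[0, t] (fun s => mu * cos (psi s) - 1).

Definition trajy (mu : R) (psi : R -> R) (y0 : R) (t : R) : R :=
  y0 + Rintegral lebesgue_measure `[0, t] (fun s => mu * sin (psi s)).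

Definition dist2 (mu : R) (psi : R -> R) (x0 y0 t : R) : R :=
  trajx mu psi x0 t ^+ 2 + trajy mu psi y0 t ^+ 2.

Definition admissible (mu T : R) (x0 y0 : R) (psi : R -> R) : Prop :=
  measurable_fun `[0, T] psi /\
  forall t, 0 <= t <= T -> 1 <= dist2 mu psi x0 y0 t.

Definition optimal (mu T : R) (x0 y0 : R) (psi : R -> R) : Prop :=
  admissible mu T x0 y0 psi /\
  forall psi', admissible mu T x0 y0 psi' ->
    dist2 mu psi' x0 y0 T <= dist2 mu psi x0 y0 T.

End PE.

From HB Require Import structures.
From mathcomp Require Import all_boot all_order all_algebra.
From mathcomp Require Import all_classical all_reals all_analysis.
From mathcomp Require Import measurable_realfun.
From mathcomp Require Import ring lra.
Import Order.TTheory GRing.Theory Num.Theory.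
Import numFieldNormedType.Exports.
Set Implicit Arguments.
Unset Strict Implicit.
Unset Printing Implicit Defensive.
Local Open Scope classical_set_scope.
Local Open Scope ring_scope.

(* Ignoring the constraint, the Evader's position at time T ranges over the
   disk of radius mu T centred at (x0 - T, y0), whose farthest point from the
   origin is reached only by the constant heading u along (x0 - T, y0).  When
   x0 <= 0 or y0 >= 1 this straight run stays strictly outside the unit
   circle, so an optimal heading must do at least as well; this forces the
   displacement D(T) = int_0^T (cos psi, sin psi) to satisfy <u, D(T)> >= T.
   The slack t - <u, D(t)> is nonnegative and nondecreasing in t, so it
   vanishes on [0, T]; together with |D(t)| <= t this gives D(t) = t u, i.e.
   the optimal trajectory is the straight run itself. *)

Section PlaneAlgebra.
Variable R : realFieldType.

Lemma eq_scale_of_dot_ge (a b ux uy t : R) :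
  ux ^+ 2 + uy ^+ 2 = 1 -> 0 <= t -> a ^+ 2 + b ^+ 2 <= t ^+ 2 ->
  t <= ux * a + uy * b -> a = t * ux /\ b = t * uy.
Proof.
move=> u1 t0 ab_le dot_ge.
have dev0 : (a - t * ux) ^+ 2 + (b - t * uy) ^+ 2 <= 0.
  have -> : (a - t * ux) ^+ 2 + (b - t * uy) ^+ 2 =
    a ^+ 2 + b ^+ 2 - 2 * t * (ux * a + uy * b) + t ^+ 2 * (ux ^+ 2 + uy ^+ 2)
    by ring.
  rewrite u1 mulr1; nra.
have := sqr_ge0 (a - t * ux); have := sqr_ge0 (b - t * uy).
move=> b_sq a_sq; split; apply/eqP; rewrite -subr_eq0 -sqrf_eq0 eq_le sqr_ge0 andbT;
  lra.
Qed.

Section StraightRun.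
Variables (mu T x0 y0 S ux uy : R).
Hypotheses (mu_gt0 : 0 < mu) (S_gt0 : 0 < S).
Hypotheses (ex : x0 - T = S * ux) (ey : y0 = S * uy).

Lemma straight_run_farthest (a b : R) :
  ux ^+ 2 + uy ^+ 2 = 1 -> a ^+ 2 + b ^+ 2 <= T ^+ 2 ->
  (x0 + mu * (T * ux) - T) ^+ 2 + (y0 + mu * (T * uy)) ^+ 2 <=
    (x0 + mu * a - T) ^+ 2 + (y0 + mu * b) ^+ 2 ->
  T <= ux * a + uy * b.
Proof.
move=> u1 ab_le far.
have x0E : x0 = S * ux + T by rewrite -ex; ring.
move: far; rewrite x0E ey.
have -> : (S * ux + T + mu * (T * ux) - T) ^+ 2 + (S * uy + mu * (T * uy)) ^+ 2 =
  (S + mu * T) ^+ 2 * (ux ^+ 2 + uy ^+ 2) by ring.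
have -> : (S * ux + T + mu * a - T) ^+ 2 + (S * uy + mu * b) ^+ 2 =
  S ^+ 2 * (ux ^+ 2 + uy ^+ 2) + 2 * mu * S * (ux * a + uy * b) +
  mu ^+ 2 * (a ^+ 2 + b ^+ 2) by ring.
rewrite u1 !mulr1 => far.
have mu_ab : mu ^+ 2 * (a ^+ 2 + b ^+ 2) <= mu ^+ 2 * T ^+ 2.
  by rewrite ler_pM2l // exprn_gt0.
have muS_gt0 : 0 < 2 * mu * S by rewrite !mulr_gt0.
rewrite -(ler_pM2l muS_gt0); nra.
Qed.

Lemma straight_run_outside (t : R) :
  0 <= y0 -> 1 < x0 ^+ 2 + y0 ^+ 2 -> (x0 <= 0 \/ 1 <= y0) -> 0 <= t <= T ->
  1 < (x0 + mu * (t * ux) - t) ^+ 2 + (y0 + mu * (t * uy)) ^+ 2.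
Proof.
move=> y0_ge0 far0 [x0_le0|y0_ge1] /andP[t_ge0 tT].
- have dot_ge0 : 0 <= x0 * ux + y0 * uy.
    rewrite -(pmulr_rge0 _ S_gt0) mulrDr !mulrA ![S * _]mulrC -!mulrA -ex -ey.
    nra.
  have -> : (x0 + mu * (t * ux) - t) ^+ 2 + (y0 + mu * (t * uy)) ^+ 2 =
    x0 ^+ 2 + y0 ^+ 2 + 2 * t * (mu * (x0 * ux + y0 * uy) - x0)
    + t ^+ 2 * ((mu * ux - 1) ^+ 2 + (mu * uy) ^+ 2) by ring.
  have : 0 <= t ^+ 2 * ((mu * ux - 1) ^+ 2 + (mu * uy) ^+ 2).
    by rewrite mulr_ge0 ?addr_ge0 ?sqr_ge0.
  have : 0 <= 2 * t * (mu * (x0 * ux + y0 * uy) - x0).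
    by rewrite !mulr_ge0 // subr_ge0 (le_trans x0_le0) // mulr_ge0 // ltW.
  lra.
- have uy_ge0 : 0 <= uy by rewrite -(pmulr_rge0 _ S_gt0) -ey.
  have : 1 <= y0 + mu * (t * uy) by rewrite -[1]addr0 lerD // !mulr_ge0 // ltW.
  have : 0 <= (x0 + mu * (t * ux) - t) ^+ 2 := sqr_ge0 _.
  case: (ltgtP t 0) t_ge0 => [|t_gt0 _|-> _] //; last first.
    by rewrite !mul0r !mulr0 !addr0 subr0.
  have uy_gt0 : 0 < uy by rewrite -(pmulr_rgt0 _ S_gt0) -ey; lra.
  have : 0 < mu * (t * uy) by rewrite !mulr_gt0.
  nra.
Qed.

End StraightRun.
End PlaneAlgebra.

Section Analysis.
Variable R : realType.
Notation leb := (@lebesgue_measure R).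

Lemma cos_sin_comb_le_sqrt (a b z : R) :
  a * cos z + b * sin z <= Num.sqrt (a ^+ 2 + b ^+ 2).
Proof.
have sq_le : (a * cos z + b * sin z) ^+ 2 <= a ^+ 2 + b ^+ 2.
  rewrite -[a ^+ 2 + b ^+ 2]mulr1 -(cos2Dsin2 z).
  have := sqr_ge0 (a * sin z - b * cos z); nra.
apply: (le_trans (ler_norm _)).
by rewrite -sqrtr_sqr ler_sqrt // addr_ge0 // sqr_ge0.
Qed.

Lemma polar_upper_half (p q : R) : 0 <= q -> 0 < p ^+ 2 + q ^+ 2 ->
  exists S th : R, [/\ 0 < S, p = S * cos th & q = S * sin th].
Proof.
move=> q_ge0 pq_gt0; set S := Num.sqrt (p ^+ 2 + q ^+ 2).
have S_gt0 : 0 < S by rewrite sqrtr_gt0.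
have SS : S ^+ 2 = p ^+ 2 + q ^+ 2 by rewrite sqr_sqrtr // ltW.
have unit_pq : (p / S) ^+ 2 + (q / S) ^+ 2 = 1.
  by rewrite !expr_div_n -mulrDl -SS divff // expf_neq0 // gt_eqF.
have p_bnd : -1 <= p / S <= 1.
  have := sqr_ge0 (q / S); have := sqr_ge0 (p / S).
  by move=> ? ?; apply/andP; split; nra.
exists S, (acos (p / S)); split => //.
  by rewrite acosK ?in_itv //= mulrC divfK // gt_eqF.
rewrite sin_acos //.
have -> : 1 - (p / S) ^+ 2 = (q / S) ^+ 2 by rewrite -unit_pq addrAC subrr add0r.
rewrite sqrtr_sqr ger0_norm.
  by rewrite mulrC divfK // gt_eqF.
by rewrite divr_ge0 // ltW.
Qed.

Lemma lebesgue_measure_itv0 (t : R) : 0 <= t -> leb `[0, t] = t%:E.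
Proof.
move=> t_ge0; rewrite lebesgue_measure_itv /= lte_fin.
by case: ltgtP t_ge0 => // [_ _|<- _]; rewrite ?oppr0 ?addr0.
Qed.

Lemma Rintegral_cst_itv0 (t c : R) :
  0 <= t -> Rintegral leb `[0, t] (fun=> c) = c * t.
Proof.
move=> t_ge0; rewrite Rintegral_cst //.
by congr (c * _); rewrite -[RHS]/(fine t%:E) -lebesgue_measure_itv0.
Qed.

Lemma integrable_bounded_comp (k f : R -> R) (M t : R) :
  continuous k -> (forall z, `|k z| <= M) -> measurable_fun `[0, t] f ->
  leb.-integrable `[0, t] (EFin \o (k \o f)).
Proof.
move=> k_cont k_bnd f_meas.
apply: measurable_bounded_integrable => //.
- by have := lebesgue_measure_itv `[0, t]; rewrite /= => ->; case: ifP; rewrite ?ltry.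
- apply: measurableT_comp => //; exact: continuous_measurable_fun.
- rewrite /bounded_near; near=> N => s _ /=; apply: le_trans (k_bnd _) _.
  near: N; apply: nbhs_pinfty_ge; exact: num_real.
Unshelve. all: end_near. Qed.

Lemma integrable_cst_itv0 (t c : R) : leb.-integrable `[0, t] (EFin \o (fun=> c)).
Proof.
apply: (@integrable_bounded_comp (fun=> c) id `|c|) => //.
exact: cst_continuous.
Qed.

Lemma dist2_cst_heading (mu th x0 y0 t : R) : 0 <= t ->
  dist2 mu (fun=> th) x0 y0 t =
  (x0 + mu * (t * cos th) - t) ^+ 2 + (y0 + mu * (t * sin th)) ^+ 2.
Proof.
move=> t_ge0; rewrite /dist2 /trajx /trajy !Rintegral_cst_itv0 //.
by congr (_ ^+ 2 + _ ^+ 2); ring.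
Qed.

Section Heading.
Variables (psi : R -> R) (T : R).
Hypothesis psi_meas : measurable_fun `[0, T] psi.

Definition cum_cos (t : R) : R := Rintegral leb `[0, t] (fun s => cos (psi s)).
Definition cum_sin (t : R) : R := Rintegral leb `[0, t] (fun s => sin (psi s)).

Let psi_meas_sub (t : R) : 0 <= t <= T -> measurable_fun `[0, t] psi.
Proof.
case/andP=> _ tT; apply: measurable_funS psi_meas => // s /=; rewrite !in_itv /=.
by case/andP=> -> st; apply: le_trans st tT.
Qed.

Let integrable_cos (t : R) : 0 <= t <= T ->
  leb.-integrable `[0, t] (EFin \o (fun s => cos (psi s))).
Proof.
move=> t_itv; apply: (@integrable_bounded_comp cos psi 1) => [|z|];
  [exact: continuous_cos | | exact: psi_meas_sub].
by rewrite ler_norml cos_le1 cos_geN1.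
Qed.

Let integrable_sin (t : R) : 0 <= t <= T ->
  leb.-integrable `[0, t] (EFin \o (fun s => sin (psi s))).
Proof.
move=> t_itv; apply: (@integrable_bounded_comp sin psi 1) => [|z|];
  [exact: continuous_sin | | exact: psi_meas_sub].
by rewrite ler_norml sin_le1 sin_geN1.
Qed.

Let integrable_scale_cos (a t : R) : 0 <= t <= T ->
  leb.-integrable `[0, t] (EFin \o (fun s => a * cos (psi s))).
Proof.
by move=> t_itv; apply: eq_integrable (integrableZl _ a (integrable_cos t_itv)).
Qed.

Let integrable_scale_sin (b t : R) : 0 <= t <= T ->
  leb.-integrable `[0, t] (EFin \o (fun s => b * sin (psi s))).
Proof.
by move=> t_itv; apply: eq_integrable (integrableZl _ b (integrable_sin t_itv)).
Qed.

Let integrable_comb (a b t : R) : 0 <= t <= T ->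
  leb.-integrable `[0, t] (EFin \o (fun s => a * cos (psi s) + b * sin (psi s))).
Proof.
move=> t_itv.
exact: eq_integrable _ _ _ _
  (integrableD _ (integrable_scale_cos a t_itv) (integrable_scale_sin b t_itv)).
Qed.

Lemma Rintegral_cos_sin_comb (a b t : R) : 0 <= t <= T ->
  Rintegral leb `[0, t] (fun s => a * cos (psi s) + b * sin (psi s)) =
  a * cum_cos t + b * cum_sin t.
Proof.
move=> t_itv; rewrite RintegralD ?integrable_scale_cos ?integrable_scale_sin //.
by rewrite !RintegralZl ?integrable_cos ?integrable_sin.
Qed.

Lemma dist2_cum (mu x0 y0 t : R) : 0 <= t <= T ->
  dist2 mu psi x0 y0 t =
  (x0 + mu * cum_cos t - t) ^+ 2 + (y0 + mu * cum_sin t) ^+ 2.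
Proof.
move=> t_itv; have t_ge0 : 0 <= t by case/andP: t_itv.
rewrite /dist2 /trajx /trajy RintegralB ?integrable_scale_cos ?integrable_cst_itv0 //.
rewrite !RintegralZl ?integrable_cos ?integrable_sin ?Rintegral_cst_itv0 //.
by rewrite mul1r addrA.
Qed.

Lemma cos_sin_comb_cum_le (a b t : R) : 0 <= t <= T ->
  a * cum_cos t + b * cum_sin t <= t * Num.sqrt (a ^+ 2 + b ^+ 2).
Proof.
move=> t_itv; have t_ge0 : 0 <= t by case/andP: t_itv.
rewrite -Rintegral_cos_sin_comb // mulrC -Rintegral_cst_itv0 //.
apply: le_Rintegral => //; [exact: integrable_comb | exact: integrable_cst_itv0 |].
by move=> s _; apply: cos_sin_comb_le_sqrt.
Qed.

Lemma cum_norm_le (t : R) : 0 <= t <= T -> cum_cos t ^+ 2 + cum_sin t ^+ 2 <= t ^+ 2.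
Proof.
move=> t_itv; have t_ge0 : 0 <= t by case/andP: t_itv.
have := cos_sin_comb_cum_le (cum_cos t) (cum_sin t) t_itv; rewrite -!expr2.
set W := _ + _ => W_le; have W_ge0 : 0 <= W by rewrite addr_ge0 ?sqr_ge0.
have s_ge0 := sqrtr_ge0 W; have := sqr_sqrtr W_ge0.
move: W_le; set s := Num.sqrt W => W_le W_sq.
have s_le : s <= t.
  case: (ltgtP s 0) s_ge0 => [|s_gt0 _|-> _] //.
  by rewrite -(ler_pM2l s_gt0) -expr2 W_sq mulrC.
by rewrite -W_sq !expr2 ler_pM.
Qed.

Lemma Rintegral_cos_sin_slack (a b t : R) : 0 <= t <= T ->
  Rintegral leb `[0, t] (fun s => 1 - (a * cos (psi s) + b * sin (psi s))) =
  t - (a * cum_cos t + b * cum_sin t).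
Proof.
move=> t_itv; have t_ge0 : 0 <= t by case/andP: t_itv.
rewrite RintegralB ?integrable_cst_itv0 ?integrable_comb //.
by rewrite Rintegral_cst_itv0 // mul1r Rintegral_cos_sin_comb.
Qed.

Lemma cum_slack_le (ux uy t : R) : ux ^+ 2 + uy ^+ 2 = 1 -> 0 <= t <= T ->
  t - (ux * cum_cos t + uy * cum_sin t) <= T - (ux * cum_cos T + uy * cum_sin T).
Proof.
move=> u1 t_itv; case/andP: (t_itv) => t_ge0 tT.
have T_itv : 0 <= T <= T by rewrite lexx (le_trans t_ge0 tT).
rewrite -!Rintegral_cos_sin_slack // -subr_ge0 Rintegral_itvB ?bnd_simp //.
  apply: Rintegral_ge0 => s _; rewrite subr_ge0.
  by have := cos_sin_comb_le_sqrt ux uy (psi s); rewrite u1 sqrtr1.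
exact: eq_integrable _ _ _ _
  (integrableB _ (integrable_cst_itv0 T 1) (integrable_comb ux uy T_itv)).
Qed.

Lemma cum_eq_of_aligned (ux uy t : R) : ux ^+ 2 + uy ^+ 2 = 1 -> 0 <= t <= T ->
  T <= ux * cum_cos T + uy * cum_sin T -> cum_cos t = t * ux /\ cum_sin t = t * uy.
Proof.
move=> u1 t_itv aligned; have t_ge0 : 0 <= t by case/andP: t_itv.
apply: eq_scale_of_dot_ge => //; first exact: cum_norm_le.
have := cum_slack_le u1 t_itv; lra.
Qed.

End Heading.
End Analysis.

Theorem lemma1 (R : realType) (mu T x0 y0 : R) :
  0 < mu -> mu < 1 -> 0 < T ->
  0 <= y0 -> 1 < x0 ^+ 2 + y0 ^+ 2 -> (x0 <= 0 \/ 1 <= y0) ->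
  forall psi : R -> R, optimal mu T x0 y0 psi ->
  forall t : R, 0 <= t <= T -> 1 < dist2 mu psi x0 y0 t.
Proof.
move=> mu_gt0 _ T_gt0 y0_ge0 far0 x0_y0 psi [[psi_meas _] psi_max] t t_itv.
have [S [th [S_gt0 ex ey]]] :
    exists S th : R, [/\ 0 < S, x0 - T = S * cos th & y0 = S * sin th].
  apply: polar_upper_half => //.
  have := sqr_ge0 (x0 - T); have := sqr_ge0 y0; case: x0_y0 => [x0_le0|y0_ge1].
  - have : 0 < (x0 - T) ^+ 2 by rewrite exprn_even_gt0 //= ltr0_neq0 //; lra.
    lra.
  - have : 0 < y0 ^+ 2 by rewrite exprn_gt0 //; lra.
    lra.
have outside := straight_run_outside mu_gt0 S_gt0 ex ey y0_ge0 far0 x0_y0.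
have straight_adm : admissible mu T x0 y0 (fun=> th).
  split=> [|s s_itv]; first exact: measurable_cst.
  have [s_ge0 _] := andP s_itv.
  by rewrite dist2_cst_heading //; apply/ltW/outside.
have T_itv : 0 <= T <= T by rewrite lexx ltW.
have aligned : T <= cos th * cum_cos psi T + sin th * cum_sin psi T.
  apply: (straight_run_farthest mu_gt0 S_gt0 ex ey (cos2Dsin2 th)
    (cum_norm_le psi_meas T_itv)).
  rewrite -(dist2_cum psi_meas) // -dist2_cst_heading ?(ltW T_gt0) //; exact: psi_max.
rewrite (dist2_cum psi_meas) //.
have [-> ->] := cum_eq_of_aligned psi_meas (cos2Dsin2 th) t_itv aligned.
exact: outside.
Qed.
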